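(* Let $\mathcal I\neq\mathrm{Fin}$ be an ideal on $\mathbb N$ for which there exists an infinite set $E\subset\mathbb N$ such that: (I) no infinite subset of $E$ belongs to $\mathcal I$; (II) $\sup\{e_{n+1}-e_n\colon n\in\mathbb N\}<\infty$, where $(e_n)_{n\in\mathbb N}$ is the increasing enumeration of $E$. Then for each normed space $X$ and every divergent series $\sum_n x_n$ in $X$ which is $\mathcal I$-convergent, the set $$A(\mathcal I):=\left\{t \in \{0,1\}^{\mathbb N} \colon \sum_n t(n)x_n \text{ is } \mathcal I\text{-convergent}\right\}$$ satisfies $\lambda(A(\mathcal I))=0$.
   Context: $\mathbb N=\{1,2,\dots\}$; $\mathrm{Fin}$ denotes the ideal of finite subsets of $\mathbb N$. An ideal on $\mathbb N$ is a family $\mathcal I\subset\mathcal P(\mathbb N)$ closed under finite unions and subsets, with $\mathbb N\notin\mathcal I$ and $\mathrm{Fin}\subset\mathcal I$. A sequence $(y_n)$ in a normed space is $\mathcal I$-convergent to $y$ if $\{n:\|y_n-y\|>\varepsilon\}\in\mathcal I$ for every $\varepsilon>0$; a series is $\mathcal I$-convergent if its sequence of partial sums is $\mathcal I$-convergent to some element. $\lambda$ is the product probability measure on $\{0,1\}^{\mathbb N}$ generated by the measure giving mass $1/2$ to each of $0$ and $1$. Normed spaces are over $\mathbb R$. *)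

From HB Require Import structures.
From mathcomp Require Import all_boot all_order all_algebra.
From mathcomp Require Import all_classical all_reals all_analysis.
Set Implicit Arguments. Unset Strict Implicit. Unset Printing Implicit Defensive.
Import Order.TTheory GRing.Theory Num.Theory.
Import numFieldNormedType.Exports.
Local Open Scope classical_set_scope.
Local Open Scope ring_scope.

(* Indices: the paper's N = {1,2,...} is relabelled as nat = {0,1,...}
   via n |-> n-1. *)

Definition is_ideal (I : set (set nat)) : Prop :=
  [/\ (forall A B, I A -> I B -> I (A `|` B)),
      (forall A B, B `<=` A -> I A -> I B),
      ~ I setT &
      (forall A, finite_set A -> I A)].

(* I is different from Fin (given Fin ⊆ I): some member of I is infinite. *)
Definition ideal_neq_Fin (I : set (set nat)) : Prop :=
  I <> [set A | finite_set A].

Definition Icvg (R : realType) (X : normedModType R) (I : set (set nat))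
    (y : nat -> X) (l : X) : Prop :=
  forall eps : R, 0 < eps -> I [set n | eps < `|y n - l|].

(* Partial sums S_n = x_0 + ... + x_n (paper: x_1 + ... + x_n). *)
Definition psum (R : realType) (X : normedModType R) (x : nat -> X) : nat -> X :=
  fun n => \sum_(0 <= k < n.+1) x k.

Definition Icvg_series (R : realType) (X : normedModType R) (I : set (set nat))
    (x : nat -> X) : Prop :=
  exists l : X, Icvg I (psum x) l.

Definition series_converges (R : realType) (X : normedModType R) (x : nat -> X) : Prop :=
  exists l : X, psum x @ \oo --> l.

Definition A_set (R : realType) (X : normedModType R) (I : set (set nat))
    (x : nat -> X) : set (nat -> bool) :=
  [set t | Icvg_series I (fun n => ((t n)%:R : R) *: x n)].

Definition cylinder (s : seq bool) : set cantor_space :=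
  [set t | forall i, (i < size s)%N -> t i = nth false s i].

Definition cylinders : set (set cantor_space) := range cylinder.

Definition Cantor := g_sigma_algebraType cylinders.

(* mu is the product of the fair coin measures: mu(cylinder s) = 2^-|s|.
   Such a measure exists and is unique (it is lambda). *)
Definition is_coin_product (R : realType)
    (mu : {measure set Cantor -> \bar R}) : Prop :=
  forall s : seq bool, mu (cylinder s) = ((2%:R : R) ^- size s)%:E.

From HB Require Import structures.
From mathcomp Require Import all_boot all_order all_algebra.
From mathcomp Require Import all_classical all_reals all_analysis.
From mathcomp Require Import ring lra zify.
Set Implicit Arguments. Unset Strict Implicit. Unset Printing Implicit Defensive.
Import Order.TTheory GRing.Theory Num.Theory.
Import numFieldNormedType.Exports.
Local Open Scope classical_set_scope.
Local Open Scope ring_scope.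

(* The partial sums S_n of x do not converge, but by (I) they converge to their
   I-limit along E; with the bounded gaps of E this gives eps > 0 and infinitely many
   disjoint windows e < n < e' with e, e' in E, e' - e <= M and |S_n - S_e| > eps.
   If t is 1 on (e, n] and 0 on (n, e'], the t-weighted partial sums move by S_n - S_e
   from e to e'; when they are I-convergent they also converge along E, so t matches
   only finitely many windows.  For the coin measure each window is matched with
   probability at least 2^-M, independently for disjoint windows, so almost every t
   matches infinitely many of them. *)

Section CoinMean.
Variable R : numFieldType.

Fixpoint coin_mean (L : nat) (F : seq bool -> R) : R :=
  if L is L'.+1 then
    (coin_mean L' (fun u => F (false :: u)) + coin_mean L' (fun u => F (true :: u))) / 2
  else F [::].

Lemma coin_mean_cat K L F :
  coin_mean (K + L) F = coin_mean K (fun u => coin_mean L (fun v => F (u ++ v))).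
Proof. by elim: K F => [|K IH] F //=; rewrite !IH. Qed.

Lemma ler_coin_mean L F G :
  (forall u, size u = L -> F u <= G u) -> coin_mean L F <= coin_mean L G.
Proof.
elim: L F G => [|L IH] F G FG /=; first exact: FG.
rewrite ler_pM2r ?invr_gt0 ?ltr0n //.
by apply: lerD; apply: IH => u su; apply: FG; rewrite /= su.
Qed.

Lemma eq_coin_mean L F G :
  (forall u, size u = L -> F u = G u) -> coin_mean L F = coin_mean L G.
Proof. by move=> FG; apply/le_anti; rewrite !ler_coin_mean // => u /FG ->. Qed.

Lemma coin_mean_cst L c : coin_mean L (fun=> c) = c.
Proof. by elim: L => [|L IH] //=; rewrite IH; field. Qed.

Lemma coin_meanMr L F c : coin_mean L (fun u => F u * c) = coin_mean L F * c.
Proof. by elim: L F => [|L IH] F //=; rewrite !IH; field. Qed.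

Lemma coin_meanB L F G :
  coin_mean L (fun u => F u - G u) = coin_mean L F - coin_mean L G.
Proof. by elim: L F G => [|L IH] F G //=; rewrite !IH; field. Qed.

Lemma coin_mean_prefix (w : seq bool) L : (size w <= L)%N ->
  coin_mean L (fun v => (prefix w v)%:R) = 2 ^- size w.
Proof.
elim: w L => [|b w IH] L wL.
  rewrite (@eq_coin_mean _ _ (fun=> 1)) ?coin_mean_cst ?expr0 ?invr1 // => u _.
  by rewrite prefix0s.
case: L wL => [//|L] /=; rewrite ltnS => wL.
rewrite exprS invfM mulrC; case: b => /=.
  by rewrite coin_mean_cst add0r IH.
by rewrite coin_mean_cst addr0 IH.
Qed.

End CoinMean.

Section CoinProduct.
Variables (R : realType) (mu : {measure set Cantor -> \bar R}).
Hypothesis mu_coin : is_coin_product mu.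

Lemma cylinder_mkseq s (t : cantor_space) : cylinder s t -> mkseq t (size s) = s.
Proof.
move=> st; apply: (@eq_from_nth _ false); rewrite ?size_mkseq // => i si.
by rewrite nth_mkseq // st.
Qed.

Lemma cylinder_rcons s b (t : cantor_space) :
  cylinder (rcons s b) t <-> cylinder s t /\ t (size s) = b.
Proof.
rewrite /cylinder size_rcons; split=> [st | [st tb] i].
  split=> [i si|]; last by rewrite st // nth_rcons ltnn eqxx.
  by rewrite st ?nth_rcons ?si // ltnS ltnW.
rewrite ltnS leq_eqVlt nth_rcons => /orP[/eqP ->|si]; first by rewrite ltnn eqxx.
by rewrite si st.
Qed.

Lemma cylinder_event_measure L s (P : pred (seq bool)) :
  measurable ([set t : Cantor | P (mkseq t (size s + L))] `&` cylinder s) /\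
  mu ([set t : Cantor | P (mkseq t (size s + L))] `&` cylinder s) =
  (2 ^- size s * coin_mean L (fun u => (P (s ++ u))%:R))%:E.
Proof.
elim: L s => [|L IH] s.
  have -> : [set t : Cantor | P (mkseq t (size s + 0))] `&` cylinder s =
            if P s then cylinder s else set0.
    apply/seteqP; split=> t /=; rewrite addn0.
      by case=> + st; rewrite cylinder_mkseq // => ->.
    by case: ifP => // Ps st; rewrite cylinder_mkseq.
  rewrite /= cats0; case: (P s); split.
  - by apply: sub_sigma_algebra; exists s.
  - by rewrite mu_coin mulr1.
  - exact: measurable0.
  - by rewrite measure0 mulr0.
pose half b := [set t : Cantor | P (mkseq t (size (rcons s b) + L))] `&` cylinder (rcons s b).
have -> : [set t : Cantor | P (mkseq t (size s + L.+1))] `&` cylinder s =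
          half false `|` half true.
  rewrite /half !size_rcons addSnnS; apply/seteqP; split=> t.
    move=> [Pt st]; have [tb|tb] : t (size s) = false \/ t (size s) = true.
      by case: (t (size s)); [right|left].
    - by left; split=> //; apply/cylinder_rcons.
    - by right; split=> //; apply/cylinder_rcons.
  by move=> [] [Pt /cylinder_rcons[]].
have [mF muF] := IH (rcons s false); have [mT muT] := IH (rcons s true).
split; first exact: measurableU.
rewrite measureU //; last first.
  apply/seteqP; split=> t // [] [_ /cylinder_rcons[_ tF]] [_ /cylinder_rcons[_]].
  by rewrite tF.
apply: eq_trans (congr2 (fun a b => (a + b)%E) muF muT) _.
rewrite -EFinD !size_rcons exprS invfM /=.
have catE b : coin_mean L (fun u => (P (rcons s b ++ u))%:R) =
              coin_mean L (fun u => (P (s ++ b :: u))%:R).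
  by apply: eq_coin_mean => u _; rewrite cat_rcons.
rewrite !catE.
by congr (_%:E); field; rewrite ?expf_neq0 ?pnatr_eq0.
Qed.

Lemma word_event_measure L (P : pred (seq bool)) :
  measurable [set t : Cantor | P (mkseq t L)] /\
  mu [set t : Cantor | P (mkseq t L)] = (coin_mean L (fun u => (P u)%:R))%:E.
Proof.
have [mP muP] := cylinder_event_measure L [::] P.
have -> : [set t : Cantor | P (mkseq t L)] =
          [set t : Cantor | P (mkseq t (size (@nil bool) + L))] `&` cylinder [::].
  by apply/seteqP; split=> t //= [].
by rewrite muP expr0 invr1 mul1r.
Qed.

End CoinProduct.

Definition block (T : Type) (t : nat -> T) (k m : nat) : seq T := mkseq (fun j => t (k + j)) m.

Lemma prefix_drop_take (T : eqType) (w s : seq T) k m : (k + size w <= m)%N ->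
  prefix w (drop k (take m s)) = prefix w (drop k s).
Proof. by move=> kwm; rewrite !prefixE !take_drop take_takel // addnC. Qed.

Lemma prefix_drop_mkseq (T : eqType) (w : seq T) (t : nat -> T) k L : (k + size w <= L)%N ->
  prefix w (drop k (mkseq t L)) = (block t k (size w) == w).
Proof.
move=> kwL; rewrite prefixE; congr (_ == _).
have sw : (size w <= size (drop k (mkseq t L)))%N by rewrite size_drop size_mkseq; lia.
apply: (@eq_from_nth _ (t 0%N)) => [|j]; rewrite /block size_takel // ?size_mkseq // => jw.
by rewrite nth_take // nth_drop !nth_mkseq // (leq_trans _ kwL) // ltn_add2l.
Qed.

Section AvoidingPatterns.
Variables (R : realType) (mu : {measure set Cantor -> \bar R}).
Hypothesis mu_coin : is_coin_product mu.
Variables (a : nat -> nat) (w : nat -> seq bool) (M : nat).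
Hypothesis a_disjoint : forall i, (a i + size (w i) <= a i.+1)%N.
Hypothesis size_w_le : forall i, (size (w i) <= M)%N.

Lemma pattern_end_le i k : (i < k)%N -> (a i + size (w i) <= a k)%N.
Proof.
elim: k => [//|k IH]; rewrite ltnS leq_eqVlt => /orP[/eqP -> //|ik].
by apply: leq_trans (IH ik) (leq_trans (leq_addr _ _) (a_disjoint k)).
Qed.

Definition avoids N n (u : seq bool) : bool :=
  all (fun i => ~~ prefix (w i) (drop (a i) u)) (iota N n).

Lemma avoidsS N n u v : size u = a (N + n) ->
  avoids N n.+1 (u ++ v) = avoids N n u && ~~ prefix (w (N + n)) v.
Proof.
move=> su; rewrite /avoids -addn1 iotaD all_cat /= andbT -su drop_size_cat //.
congr (_ && _); apply: eq_in_all => i; rewrite mem_iota => /andP[Ni iNn].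
rewrite -(prefix_drop_take _ (_ : a i + size (w i) <= size u)%N) ?take_size_cat //.
by rewrite su pattern_end_le.
Qed.

Let q : R := 1 - 2 ^- M.

Let q_ge0 : 0 <= q.
Proof. by rewrite subr_ge0 invf_le1 ?exprn_gt0 // exprn_ege1 // ler1n. Qed.

Let q_lt1 : q < 1.
Proof. by rewrite ltrBlDr ltrDl invr_gt0 exprn_gt0. Qed.

Lemma coin_mean_avoids N n : coin_mean (a (N + n)) (fun u => (avoids N n u)%:R) <= q ^+ n.
Proof.
elim: n => [|n IH].
  by rewrite (@eq_coin_mean _ _ _ (fun=> 1)) ?coin_mean_cst.
have aNn : (a (N + n) <= a (N + n.+1))%N.
  by rewrite addnS (leq_trans (leq_addr _ _) (a_disjoint _)).
rewrite -(subnKC aNn) coin_mean_cat exprSr.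
apply: (@le_trans _ _ (coin_mean (a (N + n)) (fun u => (avoids N n u)%:R * q))).
  apply: ler_coin_mean => u su.
  rewrite (@eq_coin_mean _ _ _
      (fun v => (1 - (prefix (w (N + n)) v)%:R) * (avoids N n u)%:R)); last first.
    move=> v _; rewrite avoidsS //.
    by case: (avoids _ _ _); case: prefix; rewrite /= ?mulr0 ?mulr1 ?subrr ?subr0.
  rewrite coin_meanMr coin_meanB coin_mean_cst coin_mean_prefix; last first.
    by rewrite addnS; have := a_disjoint (N + n); lia.
  rewrite mulrC ler_wpM2l // lerD2l lerN2 lef_pV2 ?posrE ?exprn_gt0 //.
  by rewrite ler_eXn2l ?ltr1n.
by rewrite coin_meanMr ler_wpM2r.
Qed.

Lemma avoiding_from_negligible N :
  mu.-negligible (\bigcap_n [set t : Cantor | avoids N n (mkseq t (a (N + n)))]).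
Proof.
have mG n := (word_event_measure mu_coin (a (N + n)) (avoids N n)).1.
apply/negligibleP; first exact: bigcapT_measurable.
apply/eqP; rewrite eq_le measure_ge0 andbT; apply/lee_addgt0Pr => e e_gt0.
have q_norm : `|q| < 1 by rewrite ger0_norm.
have /cvgrPdist_lt/(_ e e_gt0)[n _ qn_small] := cvg_expr q_norm.
have qn_lt := qn_small n (leqnn n).
rewrite add0e (@le_trans _ _ (mu [set t : Cantor | avoids N n (mkseq t (a (N + n)))])) //.
  by apply: le_measure; rewrite ?inE //; [exact: bigcapT_measurable | move=> t; apply].
rewrite (word_event_measure mu_coin _ _).2 lee_fin (le_trans (coin_mean_avoids N n)) // ltW //.
by rewrite sub0r normrN ger0_norm ?exprn_ge0 in qn_lt.
Qed.

Lemma eventually_avoiding_negligible :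
  mu.-negligible [set t : Cantor |
    exists N, forall i, (N <= i)%N -> block t (a i) (size (w i)) != w i].
Proof.
apply: (negligibleS _ (negligible_bigcup avoiding_from_negligible)).
move=> t [N tN]; exists N => // n _ /=; apply/allP => i; rewrite mem_iota => /andP[Ni iNn].
by rewrite prefix_drop_mkseq ?tN ?pattern_end_le.
Qed.

End AvoidingPatterns.

Lemma finite_set_nat_ub (A : set nat) : finite_set A -> exists B, forall n, A n -> (n < B)%N.
Proof.
move=> /finite_seqP[s ->]; exists (\max_(i <- s) i).+1 => n ns.
by rewrite ltnS (@leq_bigmax_seq _ s xpredT (fun i => i) n ns).
Qed.

Lemma not_cvg_frequently_far (R : realFieldType) (X : normedModType R) (y : nat -> X) (l : X) :
  ~ (y @ \oo --> l) ->
  exists2 eps : R, 0 < eps & forall N, exists2 n, (N <= n)%N & eps <= `|l - y n|.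
Proof.
move=> ncvg; apply: contrapT => near; apply: ncvg; apply/cvgrPdist_lt => eps eps_gt0.
apply: contrapT => nnear; apply: near; exists eps => // N.
apply: contrapT => nfar; apply: nnear; exists N => // n /= Nn.
by rewrite ltNge; apply/negP => far; apply: nfar; exists n.
Qed.

Lemma bounded_gaps_bracket (E : set nat) (M : nat) :
  (forall m, E m -> exists m', [/\ E m', (m < m')%N & (m' <= m + M)%N]) ->
  forall e0 n, E e0 -> (e0 <= n)%N ->
  exists e e', [/\ E e, E e', (e <= n < e')%N & (e' <= e + M)%N].
Proof.
move=> gaps e0 n E0 /subnKC <-; elim: (n - e0)%N => [|k [e [e' [Ee Ee' /andP[ek ke'] e'M]]]].
  have [e' [Ee' ? ?]] := gaps e0 E0; exists e0, e'.
  by split=> //; apply/andP; split; lia.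
have [ltk|e'E] : (e0 + k.+1 < e')%N \/ e' = (e0 + k.+1)%N by lia.
  by exists e, e'; split=> //; apply/andP; split; lia.
have [e'' [? ? ?]] := gaps _ Ee'; exists e', e''.
by split=> //; apply/andP; split; lia.
Qed.

Lemma sequence_of_disjoint (T : Type) (start stop : T -> nat) (Q : T -> Prop) :
  (forall N, exists2 z, (N <= start z)%N & Q z) ->
  exists s : nat -> T,
    forall i, [/\ Q (s i), (i <= start (s i))%N & (stop (s i) < start (s i.+1))%N].
Proof.
move=> later; have /boolp.choice[g gP] : forall N, exists z, (N <= start z)%N /\ Q z.
  by move=> N; have [z] := later N; exists z.
pose s := fix s i := if i is i'.+1 then g (maxn (stop (s i')) i').+1 else g 0%N.
exists s => i; have [iS Qi] := gP (if i is i'.+1 then (maxn (stop (s i')) i').+1 else 0%N).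
have [iS1 _] := gP (maxn (stop (s i)) i).+1.
by case: i iS Qi iS1 => [|i] /= iS Qi iS1; split=> //; lia.
Qed.

Lemma psumB (R : realType) (X : normedModType R) (z : nat -> X) (p q : nat) :
  (p <= q)%N -> psum z q - psum z p = \sum_(p.+1 <= k < q.+1) z k.
Proof.
by move=> pq; rewrite /psum (@big_cat_nat _ _ _ p.+1 0 q.+1) //= addrC addrK.
Qed.

Record window := Window { lo : nat; mid : nat; hi : nat }.

(* [t] matches [window_word z] at [(lo z).+1] iff [t] is [true] on [(lo z, mid z]]
   and [false] on [(mid z, hi z]]. *)
Definition window_word (z : window) : seq bool :=
  mkseq (fun j => (lo z + j < mid z)%N) (hi z - lo z).

Lemma block_window_psum (R : realType) (X : normedModType R) (x : nat -> X)
    (t : nat -> bool) (z : window) :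
  (lo z <= mid z <= hi z)%N -> block t (lo z).+1 (hi z - lo z) = window_word z ->
  psum (fun k => (t k)%:R *: x k) (hi z) - psum (fun k => (t k)%:R *: x k) (lo z) =
  psum x (mid z) - psum x (lo z).
Proof.
move=> /andP[lm mh] tz.
have t_win k : (lo z < k <= hi z)%N -> t k = (k <= mid z)%N.
  move=> /andP[lk kh]; rewrite -(subnKC lk) addSn.
  have j_lt : (k - (lo z).+1 < hi z - lo z)%N by lia.
  have := congr1 (fun s => nth false s (k - (lo z).+1)) tz.
  by rewrite /= /block /window_word !nth_mkseq // addSn => ->.
rewrite !psumB ?(leq_trans lm mh) // (@big_cat_nat _ _ _ (mid z).+1) //=.
rewrite (@eq_big_nat _ _ _ (mid z).+1 (hi z).+1 _ (fun=> 0)) => [|k /andP[mk kh]]; last first.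
  by rewrite t_win; [rewrite leqNgt mk scale0r | lia].
rewrite big1_eq addr0; apply: eq_big_nat => k /andP[lk km].
by rewrite t_win; [rewrite -ltnS km scale1r | lia].
Qed.

Section JumpWindows.
Variables (I : set (set nat)) (E : set nat) (M : nat).
Hypothesis I_ideal : is_ideal I.
Hypothesis E_I : forall F, F `<=` E -> ~ finite_set F -> ~ I F.
Hypothesis E_gaps : forall m, E m -> exists m', [/\ E m', (m < m')%N & (m' <= m + M)%N].
Variables (R : realType) (X : normedModType R).

Lemma Icvg_eventually_on (y : nat -> X) (l : X) : Icvg I y l ->
  forall eps : R, 0 < eps -> exists B, forall n, E n -> (B <= n)%N -> `|y n - l| <= eps.
Proof.
move=> yl eps eps_gt0; case: I_ideal => _ I_sub _ _.
pose F := E `&` [set n | eps < `|y n - l|].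
have /finite_set_nat_ub[B FB] : finite_set F.
  apply: contrapT => /(E_I (@subIsetl _ _ _)); apply.
  exact: I_sub _ _ (@subIsetr _ _ _) (yl _ eps_gt0).
exists B => n En Bn; rewrite leNgt; apply/negP => far.
by have := FB n (conj En far); rewrite ltnNge Bn.
Qed.

Definition jump_window (x : nat -> X) (eps : R) (z : window) : Prop :=
  [/\ E (lo z) /\ E (hi z), (lo z < mid z < hi z)%N, (hi z <= lo z + M)%N
    & eps < `|psum x (mid z) - psum x (lo z)|].

Lemma jump_windows (x : nat -> X) (l : X) :
  E !=set0 -> ~ (psum x @ \oo --> l) -> Icvg I (psum x) l ->
  exists2 eps : R, 0 < eps & forall N, exists2 z, (N <= lo z)%N & jump_window x eps z.
Proof.
move=> [e0 E0] ncvg xl.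
have [eps eps_gt0 far] := not_cvg_frequently_far ncvg.
have eps2_gt0 : 0 < eps / 2 by rewrite divr_gt0.
have [B close] := Icvg_eventually_on xl eps2_gt0.
exists (eps / 4) => [|N]; first by rewrite divr_gt0.
have [n Nn far_n] := far (N + B + e0 + M)%N.
have e0n : (e0 <= n)%N by lia.
have [e [e' [Ee Ee' /andP[en ne'] e'M]]] := bounded_gaps_bracket E_gaps E0 e0n.
have Be : (B <= e)%N by lia.
have close_e := close e Ee Be; rewrite distrC in close_e.
have jump : eps / 2 <= `|psum x n - psum x e|.
  have := ler_distD (psum x e) l (psum x n); rewrite (distrC (psum x e)); lra.
have e_lt_n : (e < n)%N.
  rewrite ltn_neqAle en andbT; apply: contraTneq jump => ->.
  by rewrite subrr normr0 -ltNge.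
exists (Window e n e') => /=; first lia.
by split=> //; [rewrite e_lt_n | lra].
Qed.

Lemma Icvg_misses_jump_windows (x : nat -> X) (eps : R) (t : nat -> bool) (L : X) :
  0 < eps -> Icvg I (psum (fun k => (t k)%:R *: x k)) L ->
  exists B, forall z, (B <= lo z)%N -> jump_window x eps z ->
    block t (lo z).+1 (hi z - lo z) != window_word z.
Proof.
move=> eps_gt0 tL; have eps2_gt0 : 0 < eps / 2 by rewrite divr_gt0.
have [B close] := Icvg_eventually_on tL eps2_gt0.
exists B => z Bz [[Elo Ehi] /andP[lm mh] _ jump]; apply/negP => /eqP tz.
have lmh : (lo z <= mid z <= hi z)%N by rewrite (ltnW lm) (ltnW mh).
move: jump; rewrite -(block_window_psum x lmh tz); set y := psum _.
have := ler_distD L (y (hi z)) (y (lo z)); rewrite (distrC L).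
have := close _ Elo Bz; have := close _ Ehi (leq_trans Bz (ltnW (ltn_trans lm mh))).
lra.
Qed.

End JumpWindows.

Theorem theorem4p5 (I : set (set nat)) (hI : is_ideal I) (hIF : ideal_neq_Fin I)
  (hE : exists E : set nat,
      [/\ ~ finite_set E,
          (forall F, F `<=` E -> ~ finite_set F -> ~ I F) &
          (exists M : nat, forall m, E m ->
              exists m', [/\ E m', (m < m')%N & (m' <= m + M)%N])])
  (R : realType) (X : normedModType R) (x : nat -> X)
  (hdiv : ~ series_converges x) (hIc : Icvg_series I x)
  (mu : {measure set Cantor -> \bar R}) (hmu : is_coin_product mu) :
  mu.-negligible (A_set I x : set Cantor).
Proof.
have [E [E_infinite E_I [M E_gaps]]] := hE.
have [l xl] := hIc.
have x_ncvg : ~ (psum x @ \oo --> l) by move=> xl'; apply: hdiv; exists l.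
have [eps eps_gt0 jumps] :=
  jump_windows hI E_I E_gaps (infinite_setN0 E_infinite) x_ncvg xl.
have [s sP] := sequence_of_disjoint hi jumps.
pose a i := (lo (s i)).+1; pose w i := window_word (s i).
have size_w i : size (w i) = (hi (s i) - lo (s i))%N by rewrite size_mkseq.
apply: (negligibleS _ (@eventually_avoiding_negligible R mu hmu a w M _ _)) => [t [L tL]|i|i].
- have [B miss] := Icvg_misses_jump_windows M hI E_I eps_gt0 tL.
  exists B => i Bi; rewrite size_w; have [jump lo_ge _] := sP i.
  exact: miss (leq_trans Bi lo_ge) jump.
- by have [[_ /andP[lm mh] _ _] _ next] := sP i; rewrite size_w /a; lia.
- by have [[_ _ hM _] _ _] := sP i; rewrite size_w; lia.
Qed.
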